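(* Let $\phi(x)=\psi_0(\psi_1(x),\dots,\psi_n(x))$ where $\psi_0(y_1,\dots,y_n)$ is an IPC formula in which each $y_i$ is negative, and each $\psi_i$ ($1\le i\le n$) is an IPC formula in which $x$ is negative (formulas may contain further parameter variables). Then for every Heyting algebra $H$ and valuation $v$ of the parameters, the map $F(h)=[\![\phi]\!]_{(v,h/x)}$ satisfies $F^{n+2}(\bot)=F^{n+1}(\bot)$, i.e. $F^{n+1}(\bot)$ is the least fixed point of $F$.
   Context: An occurrence of a variable is negative in a formula if the path in the syntax tree from the root to it passes through an odd number of nodes labelled by an implication $\chi_1\to\chi_2$ whose successor on the path is $\chi_1$; a variable is negative in a formula if all its occurrences are negative. $(v,h/x)$ extends $v$ by sending $x$ to $h$. *)

From mathcomp Require Import all_boot.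
Set Implicit Arguments. Unset Strict Implicit. Unset Printing Implicit Defensive.

Record heyting := Heyting {
  hcar :> Type;
  hle : hcar -> hcar -> Prop;
  hbot : hcar;
  htop : hcar;
  hmeet : hcar -> hcar -> hcar;
  hjoin : hcar -> hcar -> hcar;
  himp : hcar -> hcar -> hcar;
  hle_refl : forall a, hle a a;
  hle_trans : forall a b c, hle a b -> hle b c -> hle a c;
  hle_anti : forall a b, hle a b -> hle b a -> a = b;
  hbot_le : forall a, hle hbot a;
  hle_top : forall a, hle a htop;
  hmeetP : forall a b c, hle c (hmeet a b) <-> (hle c a /\ hle c b);
  hjoinP : forall a b c, hle (hjoin a b) c <-> (hle a c /\ hle b c);
  himpP : forall a b c, hle c (himp a b) <-> hle (hmeet c a) b
}.

(** IPC formulas over propositional variables indexed by nat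
    (negation is [Imp f Bot]). *)
Inductive form :=
  | Var of nat
  | Bot
  | Top
  | And of form & form
  | Or of form & form
  | Imp of form & form.

Fixpoint eval (H : heyting) (v : nat -> H) (f : form) : H :=
  match f with
  | Var z => v z
  | Bot => hbot H
  | Top => htop H
  | And a b => hmeet (eval v a) (eval v b)
  | Or a b => hjoin (eval v a) (eval v b)
  | Imp a b => himp (eval v a) (eval v b)
  end.

Definition upd (H : heyting) (v : nat -> H) (x : nat) (h : H) : nat -> H :=
  fun z => if z == x then h else v z.

(** [occ p x f]: x has an occurrence in f whose polarity is p
    (p = true: positive, i.e. an even number of left-of-implication steps;
     p = false: negative, odd number). *)
Fixpoint occ (p : bool) (x : nat) (f : form) : bool :=
  match f with
  | Var z => p && (z == x)
  | Bot | Top => false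
  | And a b | Or a b => occ p x a || occ p x b
  | Imp a b => occ (~~ p) x a || occ p x b
  end.

Definition negative (x : nat) (f : form) : bool := ~~ occ true x f.

Definition occurs (x : nat) (f : form) : bool := occ true x f || occ false x f.

Fixpoint subst n (y : 'I_n -> nat) (psi : 'I_n -> form) (f : form) : form :=
  match f with
  | Var z => match [pick i | y i == z] with Some i => psi i | None => Var z end
  | Bot => Bot
  | Top => Top
  | And a b => And (subst y psi a) (subst y psi b)
  | Or a b => Or (subst y psi a) (subst y psi b)
  | Imp a b => Imp (subst y psi a) (subst y psi b)
  end.

From mathcomp Require Import all_boot.
Set Implicit Arguments. Unset Strict Implicit.

(* Every formula respects the congruences [a ~ b <-> e /\ a = e /\ b] of a
   Heyting algebra, and [F = G o (f_1, ..., f_n)] with [G] and all [f_i]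
   antitone.  Let [a_k = F^k(bot)].  By downward induction on a set [S] of
   indices one shows: if [e <= f_j(a_k)] for all [j] in [S] and
   [n - |S| < k], then [e /\ a_(k+1) <= a_k].  For [S] full, all arguments
   of [G] are [top] modulo [e], so [e /\ a_(k+1) <= G(top) <= a_1].  For
   [i] outside [S], the hypothesis for [S + i] and [e /\ f_i(a_(k-1))]
   identifies [a_k] with [a_(k-1)] modulo that element, hence
   [e /\ f_i(a_(k-1)) <= f_i(a_k)]; so [f_i(a_k) ~ f_i(a_(k-1))] modulo [e]
   for all [i], and [a_(k+1) ~ a_k].  Taking [S] empty, [e = top] and
   [k = n + 1] gives [a_(n+2) = a_(n+1)]. *)

Section HeytingFacts.
Variable H : heyting.
Implicit Types a b c d e : H.

Lemma meet_le_l a b : hle (hmeet a b) a.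
Proof. by have /(hmeetP a b (hmeet a b)) [] := hle_refl (hmeet a b). Qed.

Lemma meet_le_r a b : hle (hmeet a b) b.
Proof. by have /(hmeetP a b (hmeet a b)) [] := hle_refl (hmeet a b). Qed.

Lemma le_meet a b c : hle c a -> hle c b -> hle c (hmeet a b).
Proof. by move=> ca cb; apply/hmeetP. Qed.

Lemma le_join_l a b : hle a (hjoin a b).
Proof. by have /(hjoinP a b (hjoin a b)) [] := hle_refl (hjoin a b). Qed.

Lemma le_join_r a b : hle b (hjoin a b).
Proof. by have /(hjoinP a b (hjoin a b)) [] := hle_refl (hjoin a b). Qed.

Lemma join_le a b c : hle a c -> hle b c -> hle (hjoin a b) c.
Proof. by move=> ac bc; apply/hjoinP. Qed.

Lemma meet_imp_le a b : hle (hmeet (himp a b) a) b.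
Proof. exact/(himpP a b (himp a b))/hle_refl. Qed.

Lemma meetC_le a b : hle (hmeet a b) (hmeet b a).
Proof. exact: le_meet (meet_le_r a b) (meet_le_l a b). Qed.

Lemma meet_mono a b c d : hle a c -> hle b d -> hle (hmeet a b) (hmeet c d).
Proof.
move=> ac bd.
exact: le_meet (hle_trans (meet_le_l a b) ac) (hle_trans (meet_le_r a b) bd).
Qed.

Lemma join_mono a b c d : hle a c -> hle b d -> hle (hjoin a b) (hjoin c d).
Proof.
move=> ac bd.
exact: join_le (hle_trans ac (le_join_l c d)) (hle_trans bd (le_join_r c d)).
Qed.

Lemma imp_mono a b c d : hle c a -> hle b d -> hle (himp a b) (himp c d).
Proof.
move=> ca bd; apply/himpP; apply: hle_trans bd.
exact: hle_trans (meet_mono (hle_refl _) ca) (meet_imp_le a b).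
Qed.

Definition eq_mod e a b := hmeet e a = hmeet e b.

Lemma eq_modP e a b : eq_mod e a b <-> hle (hmeet e a) b /\ hle (hmeet e b) a.
Proof.
split=> [eab | [ab ba]].
  by split; [rewrite eab | rewrite -eab]; apply: meet_le_r.
by apply: hle_anti; apply: le_meet ab + apply: le_meet ba; apply: meet_le_l.
Qed.

Lemma eq_mod_le e a b : eq_mod e a b -> hle e b -> hle e a.
Proof.
move=> /eq_modP [_ ba] eb; apply: hle_trans ba.
exact: le_meet (hle_refl e) eb.
Qed.

Section Operations.
Variables (e : H) (op : H -> H -> H).
Hypothesis op_le : forall a1 a2 b1 b2, eq_mod e a1 a2 -> eq_mod e b1 b2 ->
  hle (hmeet e (op a1 b1)) (op a2 b2).

Lemma eq_mod_op a1 a2 b1 b2 : eq_mod e a1 a2 -> eq_mod e b1 b2 ->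
  eq_mod e (op a1 b1) (op a2 b2).
Proof. by move=> ea eb; apply/eq_modP; split; apply: op_le. Qed.

End Operations.

Lemma eq_mod_meet_le e a1 a2 b1 b2 : eq_mod e a1 a2 -> eq_mod e b1 b2 ->
  hle (hmeet e (hmeet a1 b1)) (hmeet a2 b2).
Proof.
move=> /eq_modP [ea _] /eq_modP [eb _]; apply: le_meet.
  exact: hle_trans (meet_mono (hle_refl e) (meet_le_l a1 b1)) ea.
exact: hle_trans (meet_mono (hle_refl e) (meet_le_r a1 b1)) eb.
Qed.

Lemma eq_mod_join_le e a1 a2 b1 b2 : eq_mod e a1 a2 -> eq_mod e b1 b2 ->
  hle (hmeet e (hjoin a1 b1)) (hjoin a2 b2).
Proof.
move=> /eq_modP [ea _] /eq_modP [eb _].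
apply: hle_trans (meetC_le _ _) _; apply/himpP.
apply: join_le; apply/himpP; apply: hle_trans (meetC_le _ _) _.
  exact: hle_trans ea (le_join_l _ _).
exact: hle_trans eb (le_join_r _ _).
Qed.

Lemma eq_mod_imp_le e a1 a2 b1 b2 : eq_mod e a1 a2 -> eq_mod e b1 b2 ->
  hle (hmeet e (himp a1 b1)) (himp a2 b2).
Proof.
move=> /eq_modP [_ ea] /eq_modP [eb _]; apply/himpP; apply: hle_trans eb.
set c := hmeet (hmeet e (himp a1 b1)) a2.
have ce : hle c e := hle_trans (meet_le_l _ _) (meet_le_l _ _).
have ca1 : hle c a1 := hle_trans (le_meet ce (meet_le_r _ _)) ea.
have cimp : hle c (himp a1 b1) := hle_trans (meet_le_l _ _) (meet_le_r _ _).
exact: le_meet ce (hle_trans (le_meet cimp ca1) (meet_imp_le a1 b1)).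
Qed.

End HeytingFacts.

Lemma eval_eq_mod (H : heyting) (e : H) (v1 v2 : nat -> H) (f : form) :
  (forall z, eq_mod e (v1 z) (v2 z)) -> eq_mod e (eval v1 f) (eval v2 f).
Proof.
move=> ev; elim: f => //= a iha b ihb.
- exact: eq_mod_op (@eq_mod_meet_le H e) _ _ _ _ iha ihb.
- exact: eq_mod_op (@eq_mod_join_le H e) _ _ _ _ iha ihb.
- exact: eq_mod_op (@eq_mod_imp_le H e) _ _ _ _ iha ihb.
Qed.

Lemma eval_mono (H : heyting) (f : form) (v1 v2 : nat -> H) :
  (forall z, occ true z f -> hle (v1 z) (v2 z)) ->
  (forall z, occ false z f -> hle (v2 z) (v1 z)) ->
  hle (eval v1 f) (eval v2 f).
Proof.
elim: f v1 v2 => /= [z|||a iha b ihb|a iha b ihb|a iha b ihb] v1 v2 pos neg;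
  do ?[exact: hle_refl].
- by apply: pos; rewrite eqxx.
- by apply: meet_mono; [apply: iha | apply: ihb] => z oz;
    [apply: pos | apply: neg | apply: pos | apply: neg]; rewrite oz ?orbT.
- by apply: join_mono; [apply: iha | apply: ihb] => z oz;
    [apply: pos | apply: neg | apply: pos | apply: neg]; rewrite oz ?orbT.
- by apply: imp_mono; [apply: iha | apply: ihb] => z oz;
    [apply: neg | apply: pos | apply: pos | apply: neg]; rewrite oz ?orbT.
Qed.

Section AntitoneComposite.
Variables (H : heyting) (n : nat).
Variables (G : ('I_n -> H) -> H) (f : 'I_n -> H -> H) (F : H -> H).
Hypothesis G_eq_mod : forall e z z',
  (forall i, eq_mod e (z i) (z' i)) -> eq_mod e (G z) (G z').
Hypothesis G_anti : forall z z', (forall i, hle (z i) (z' i)) -> hle (G z') (G z).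
Hypothesis f_eq_mod : forall i e h h', eq_mod e h h' -> eq_mod e (f i h) (f i h').
Hypothesis f_anti : forall i h h', hle h h' -> hle (f i h') (f i h).
Hypothesis FE : forall h, F h = G (fun i => f i h).

Local Notation a k := (iter k F (hbot H)).

Lemma F_mono h h' : hle h h' -> hle (F h) (F h').
Proof. by move=> hh'; rewrite !FE; apply: G_anti => i; apply: f_anti. Qed.

Lemma chain_le_succ k : hle (a k) (a k.+1).
Proof. by elim: k => [|k ih]; [apply: hbot_le | apply: F_mono]. Qed.

Lemma chain_mono k l : k <= l -> hle (a k) (a l).
Proof.
move=> /subnKC <-; elim: (l - k) => [|d ih]; first by rewrite addn0; apply: hle_refl.
by rewrite addnS; apply: hle_trans ih (chain_le_succ _).
Qed.

Lemma chain_le_fixpoint h k : F h = h -> hle (a k) h.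
Proof. by move=> Fh; elim: k => [|k ih]; [apply: hbot_le | rewrite -Fh; apply: F_mono]. Qed.

Lemma chain_stable_full e k : 0 < k -> (forall j, hle e (f j (a k))) ->
  hle (hmeet e (a k.+1)) (a k).
Proof.
move=> k_gt0 ef.
have -> : hmeet e (a k.+1) = hmeet e (G (fun _ => htop H)).
  rewrite /= FE; apply: G_eq_mod => i; apply/eq_modP; split; first exact: hle_top.
  exact: hle_trans (meet_le_l _ _) (ef i).
apply: hle_trans (meet_le_r _ _) (hle_trans _ (chain_mono k_gt0)).
by rewrite /= FE; apply: G_anti => i; apply: hle_top.
Qed.

Lemma chain_stable_step e k : (forall i, hle (hmeet e (f i (a k))) (f i (a k.+1))) ->
  hle (hmeet e (a k.+2)) (a k.+1).
Proof.
move=> ef.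
have -> : eq_mod e (a k.+2) (a k.+1).
  rewrite /= (FE (a k.+1)) (FE (a k)); apply: G_eq_mod => i.
  apply/eq_modP; split; last exact: ef.
  exact: hle_trans (meet_le_r _ _) (f_anti i (chain_le_succ k)).
exact: meet_le_r.
Qed.

Lemma chain_stable d (S : {set 'I_n}) k e : #|S| + d = n -> d < k ->
  (forall j, j \in S -> hle e (f j (a k))) -> hle (hmeet e (a k.+1)) (a k).
Proof.
elim: d S k e => [|d ih] S k e cardS dk eS.
  apply: chain_stable_full => // j; apply: eS.
  apply/contraT => jS; have := max_card (mem (j |: S)).
  by rewrite cardsU1 jS card_ord -[X in _ <= X]cardS addn0 ltnn.
case: k dk eS => [//|k] dk eS; apply: chain_stable_step => i.
have [/eS ei | iS] := boolP (i \in S); first exact: hle_trans (meet_le_l _ _) ei.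
set e' := hmeet e (f i (a k)).
have e'S : forall j, j \in i |: S -> hle e' (f j (a k)).
  move=> j; rewrite in_setU1 => /predU1P [-> | jS]; first exact: meet_le_r.
  exact: hle_trans (meet_le_l _ _) (hle_trans (eS j jS) (f_anti j (chain_le_succ k))).
have e'a : eq_mod e' (a k.+1) (a k).
  apply/eq_modP; split; last exact: hle_trans (meet_le_r _ _) (chain_le_succ k).
  by apply: ih e'S => //; rewrite cardsU1 iS add1n addSnnS.
exact: eq_mod_le (f_eq_mod i e'a) (meet_le_r _ _).
Qed.

Theorem composite_least_fixpoint :
  a n.+2 = a n.+1 /\ (forall h, F h = h -> hle (a n.+1) h).
Proof.
split; last by move=> h; apply: chain_le_fixpoint.
apply: hle_anti (chain_le_succ _).
have := @chain_stable n set0 n.+1 (htop H); rewrite cards0.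
move=> /(_ erefl (ltnSn n)) stable; apply: hle_trans (stable _).
  exact: le_meet (hle_top _) (hle_refl _).
by move=> j; rewrite in_set0.
Qed.

End AntitoneComposite.

Definition subst_val (H : heyting) (v : nat -> H) n (y : 'I_n -> nat)
  (z : 'I_n -> H) : nat -> H :=
  fun w => match [pick i | y i == w] with Some i => z i | None => v w end.

Lemma eval_subst (H : heyting) (v : nat -> H) (x : nat) (h : H) n
  (y : 'I_n -> nat) (psi : 'I_n -> form) (f : form) :
  ~~ occurs x f ->
  eval (upd v x h) (subst y psi f) =
  eval (subst_val v y (fun i => eval (upd v x h) (psi i))) f.
Proof.
elim: f => //= [z|a iha b ihb|a iha b ihb|a iha b ihb].
- rewrite /occurs /subst_val /upd; case: pickP => //= _.
  by rewrite orbF => /negbTE ->.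
all: move=> nx; rewrite iha ?ihb //; apply: contra nx;
  by rewrite /occurs /= => /orP [] ->; rewrite ?orbT.
Qed.

Theorem mainTheorem17 (n : nat) (x : nat) (y : 'I_n -> nat)
  (psi0 : form) (psi : 'I_n -> form) :
  injective y ->
  ~~ occurs x psi0 ->
  (forall i, negative (y i) psi0) ->
  (forall i, negative x (psi i)) ->
  forall (H : heyting) (v : nat -> H),
  let F := fun h : H => eval (upd v x h) (subst y psi psi0) in
  iter n.+2 F (hbot H) = iter n.+1 F (hbot H) /\
  (forall h, F h = h -> hle (iter n.+1 F (hbot H)) h).
Proof.
move=> _ x_psi0 y_neg x_neg H v F.
apply: (@composite_least_fixpoint H n (fun z => eval (subst_val v y z) psi0)
                                       (fun i h => eval (upd v x h) (psi i))).
- move=> e z z' ez; apply: eval_eq_mod => w; rewrite /subst_val.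
  by case: pickP => // *; apply: ez.
- move=> z z' zz'; apply: eval_mono => w ow; rewrite /subst_val;
    case: pickP => [i /eqP yi | _]; do ?exact: hle_refl; last exact: zz'.
  by move: (y_neg i); rewrite /negative yi ow.
- by move=> i e h h' eh; apply: eval_eq_mod => w; rewrite /upd; case: (w == x).
- move=> i h h' hh'; apply: eval_mono => w ow; rewrite /upd;
    case: eqP => [wx | _]; do ?exact: hle_refl; last exact: hh'.
  by move: (x_neg i); rewrite /negative -wx ow.
- by move=> h; rewrite /F eval_subst.
Qed.
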